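(* Let $\beta>2$, $r_{\mathrm e}\ge0$, $\theta_{\mathrm e}\in[0,2\pi)$, and let $F_\beta(\mathbf{x},r)$, $p_\beta,q_\beta$, $\mathbf{m}_i^\beta$, $\boldsymbol{\sigma}_i^\beta$ be as in the context. Let $\epsilon>0$ and let $\mathbf{m}_i^\beta(\cdot),\boldsymbol{\sigma}_i^\beta(\cdot):[0,\epsilon)\to\mathbb{R}^2$, $0\le i\le 2$, be smooth maps with $\mathbf{m}_i^\beta(0)=\mathbf{m}_i^\beta$, $\boldsymbol{\sigma}_i^\beta(0)=\boldsymbol{\sigma}_i^\beta$, such that $\mathbf{m}_i^\beta(r)$ and $\boldsymbol{\sigma}_i^\beta(r)$ are critical points of $F_\beta(\cdot,r)$ for every $r\in[0,\epsilon)$ (such maps exist by the implicit function theorem). Let $\phi_i^\beta(r)=F_\beta(\mathbf{m}_i^\beta(r),r)$ and $\psi_i^\beta(r)=F_\beta(\boldsymbol{\sigma}_i^\beta(r),r)$. Then for $0\le i\le2$, $$\frac{d\phi_i^\beta}{dr}(0)=(3p_\beta-1)\cos\Big(\theta_{\mathrm e}-\frac{2\pi i}{3}\Big),\qquad \frac{d\psi_i^\beta}{dr}(0)=(3q_\beta-1)\cos\Big(\theta_{\mathrm e}-\frac{2\pi i}{3}\Big).$$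
   Context: $\Xi=\{(x_1,x_2): x_1,x_2\ge0,\ x_1+x_2\le1\}$, $x_0=1-x_1-x_2$, $\mathbf{v}_k=(\cos(2\pi k/3),\sin(2\pi k/3))$, and $$F_\beta(\mathbf{x},r)=-\frac12\Big|\sum_{k=0}^2x_k\mathbf{v}_k\Big|^2+\frac1\beta\sum_{k=0}^2x_k\log(3x_k)-r\sum_{i=0}^2x_i\cos\Big(\theta_{\mathrm e}-\frac{2\pi i}{3}\Big),$$ the potential of the mean-field Potts model with external field of magnitude $r$ and angle $\theta_{\mathrm e}$. Let $f_0(t)=\frac{2}{3(1-3t)}\log\frac{1-2t}{t}$ on $(0,1/2)\setminus\{1/3\}$, $f_0(1/3)=2$; for $\beta>2$ the equation $f_0(t)=\beta$ has exactly two solutions $p_\beta<q_\beta$ in $(0,1/2)$, with $p_\beta<1/3<q_\beta$. Set $\mathbf{m}_0^\beta=(p_\beta,p_\beta)$, $\mathbf{m}_1^\beta=(1-2p_\beta,p_\beta)$, $\mathbf{m}_2^\beta=(p_\beta,1-2p_\beta)$, $\boldsymbol{\sigma}_0^\beta=(q_\beta,q_\beta)$, $\boldsymbol{\sigma}_1^\beta=(1-2q_\beta,q_\beta)$, $\boldsymbol{\sigma}_2^\beta=(q_\beta,1-2q_\beta)$; these are nondegenerate critical points of $F_\beta(\cdot,0)$. *)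

From Stdlib Require Import Reals.
From Coquelicot Require Import Coquelicot.
Open Scope R_scope.

Definition ang (k : nat) : R := 2 * PI * INR k / 3.

(* barycentric coordinate x_k of x = (x1,x2), with x0 = 1 - x1 - x2 *)
Definition xk (x : R * R) (k : nat) : R :=
  match k with
  | O => 1 - fst x - snd x
  | S O => fst x
  | _ => snd x
  end.

(* F_beta(x, r) for external field of angle theta (magnitude r);
   the convention 0 * log 0 = 0 is Stdlib's (ln 0 = 0). *)
Definition Fb (beta theta : R) (x : R * R) (r : R) : R :=
  - (1/2) * ( (xk x 0 * cos (ang 0) + xk x 1 * cos (ang 1) + xk x 2 * cos (ang 2)) ^ 2
            + (xk x 0 * sin (ang 0) + xk x 1 * sin (ang 1) + xk x 2 * sin (ang 2)) ^ 2 )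
  + / beta * ( xk x 0 * ln (3 * xk x 0) + xk x 1 * ln (3 * xk x 1)
             + xk x 2 * ln (3 * xk x 2) )
  - r * ( xk x 0 * cos (theta - ang 0) + xk x 1 * cos (theta - ang 1)
        + xk x 2 * cos (theta - ang 2) ).

Definition f0 (t : R) : R :=
  if Req_EM_T t (1/3) then 2 else 2 / (3 * (1 - 3 * t)) * ln ((1 - 2 * t) / t).

Definition in_int_Xi (x : R * R) : Prop :=
  0 < fst x /\ 0 < snd x /\ fst x + snd x < 1.

(* x is a critical point of F_beta(., r): both partial derivatives vanish.
   (F is differentiable only in the interior of Xi.) *)
Definition critical (beta theta : R) (x : R * R) (r : R) : Prop :=
  in_int_Xi x /\
  is_derive (fun t => Fb beta theta (t, snd x) r) (fst x) 0 /\
  is_derive (fun t => Fb beta theta (fst x, t) r) (snd x) 0.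

(* the critical points m_i^beta and sigma_i^beta (for t = p_beta resp. q_beta) *)
Definition cpt (t : R) (i : nat) : R * R :=
  match i with
  | O => (t, t)
  | S O => (1 - 2 * t, t)
  | _ => (t, 1 - 2 * t)
  end.

Definition is_deriv_within (D : R -> Prop) (f : R -> R) (x d : R) : Prop :=
  filterlim (fun s => (f s - f x) / (s - x)) (within D (locally' x)) (locally d).

Definition smooth_on (D : R -> Prop) (f : R -> R) : Prop :=
  exists Dn : nat -> R -> R,
    (forall x, D x -> Dn O x = f x) /\
    (forall n x, D x -> is_deriv_within D (Dn n) x (Dn (S n) x)).

Definition Ico0 (eps : R) : R -> Prop := fun r => 0 <= r < eps.

(* Envelope theorem.  Writing F(x, r) = F(x, 0) - r * c(x), the chain rule gives
   d/dr F(x(r), r) = <grad_x F(x(r), r), x'(r)> - c(x(r)), and the gradient vanishes at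
   the critical point x(0), so the derivative at 0 is -c(x(0)).  At x(0) = m_i or sigma_i
   this equals (3t - 1) cos(theta - 2 pi i / 3), because the three cosines sum to 0. *)

From Stdlib Require Import Reals Lra Lia.
From Coquelicot Require Import Coquelicot.
Open Scope R_scope.

Definition field_coupling (theta : R) (x : R * R) : R :=
  xk x 0 * cos (theta - ang 0) + xk x 1 * cos (theta - ang 1)
  + xk x 2 * cos (theta - ang 2).

Definition magnetization_x (x : R * R) : R :=
  xk x 0 * cos (ang 0) + xk x 1 * cos (ang 1) + xk x 2 * cos (ang 2).

Definition magnetization_y (x : R * R) : R :=
  xk x 0 * sin (ang 0) + xk x 1 * sin (ang 1) + xk x 2 * sin (ang 2).

(* Derivative of [Fb] in the direction raising [x_k] and lowering [x_0], for k = 1, 2. *)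
Definition partial_Fb (beta theta : R) (k : nat) (x : R * R) (r : R) : R :=
  - (magnetization_x x * (cos (ang k) - cos (ang 0))
     + magnetization_y x * (sin (ang k) - sin (ang 0)))
  + / beta * (ln (3 * xk x k) - ln (3 * xk x 0))
  - r * (cos (theta - ang k) - cos (theta - ang 0)).

Lemma in_int_Xi_xk_pos (x : R * R) :
  in_int_Xi x -> 0 < xk x 0 /\ 0 < xk x 1 /\ 0 < xk x 2.
Proof. unfold in_int_Xi, xk; simpl; lra. Qed.

Lemma is_derive_Fb_comp (beta theta : R) (u1 u2 u3 : R -> R) (r0 d1 d2 d3 : R) :
  beta <> 0 -> in_int_Xi (u1 r0, u2 r0) ->
  is_derive u1 r0 d1 -> is_derive u2 r0 d2 -> is_derive u3 r0 d3 ->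
  is_derive (fun s => Fb beta theta (u1 s, u2 s) (u3 s)) r0
    (d1 * partial_Fb beta theta 1 (u1 r0, u2 r0) (u3 r0)
     + d2 * partial_Fb beta theta 2 (u1 r0, u2 r0) (u3 r0)
     - d3 * field_coupling theta (u1 r0, u2 r0)).
Proof.
intros Hbeta Hx Hd1 Hd2 Hd3.
destruct (in_int_Xi_xk_pos _ Hx) as [H0 [H1 H2]]; unfold xk in *; simpl in *.
unfold Fb, partial_Fb, field_coupling, magnetization_x, magnetization_y, xk; simpl.
auto_derive.
- repeat split; try (eexists; eassumption); lra.
- replace (Derive (fun x => u1 x) r0) with d1 by (symmetry; now apply is_derive_unique).
  replace (Derive (fun x => u2 x) r0) with d2 by (symmetry; now apply is_derive_unique).
  replace (Derive (fun x => u3 x) r0) with d3 by (symmetry; now apply is_derive_unique).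
  replace (1 + - u1 r0 + - u2 r0) with (1 - u1 r0 - u2 r0) by ring.
  field. lra.
Qed.

Lemma critical_partial_Fb (beta theta r : R) (x : R * R) :
  beta <> 0 -> critical beta theta x r ->
  partial_Fb beta theta 1 x r = 0 /\ partial_Fb beta theta 2 x r = 0.
Proof.
intros Hbeta [Hx [Hc1 Hc2]]; destruct x as [x1 x2]; simpl in *.
assert (Hid := is_derive_id : forall t : R, is_derive (fun t => t) t 1).
assert (Hcst := is_derive_const : forall c t : R, is_derive (fun _ => c) t 0).
split.
- pose proof (is_derive_Fb_comp beta theta (fun t => t) (fun _ => x2) (fun _ => r)
    x1 1 0 0 Hbeta Hx (Hid x1) (Hcst x2 x1) (Hcst r x1)) as H.
  cbv beta in H; apply is_derive_unique in H.
  pose proof (eq_trans (eq_sym (is_derive_unique _ _ _ Hc1)) H). lra.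
- pose proof (is_derive_Fb_comp beta theta (fun _ => x1) (fun t => t) (fun _ => r)
    x2 0 1 0 Hbeta Hx (Hcst x1 x2) (Hid x2) (Hcst r x2)) as H.
  cbv beta in H; apply is_derive_unique in H.
  pose proof (eq_trans (eq_sym (is_derive_unique _ _ _ Hc2)) H). lra.
Qed.

Lemma is_derive_Fb_critical_curve (beta theta : R) (u1 u2 : R -> R) (r0 d1 d2 : R) :
  beta <> 0 -> critical beta theta (u1 r0, u2 r0) r0 ->
  is_derive u1 r0 d1 -> is_derive u2 r0 d2 ->
  is_derive (fun s => Fb beta theta (u1 s, u2 s) s) r0
    (- field_coupling theta (u1 r0, u2 r0)).
Proof.
intros Hbeta Hc Hd1 Hd2.
destruct (critical_partial_Fb _ _ _ _ Hbeta Hc) as [P1 P2].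
pose proof (is_derive_Fb_comp beta theta u1 u2 (fun s => s) r0 d1 d2 1
  Hbeta (proj1 Hc) Hd1 Hd2 (is_derive_id r0)) as H.
cbv beta in H; rewrite P1, P2 in H. replace (- field_coupling theta (u1 r0, u2 r0)) with
  (d1 * 0 + d2 * 0 - 1 * field_coupling theta (u1 r0, u2 r0)) by ring.
exact H.
Qed.

Lemma smooth_on_is_deriv_within (D : R -> Prop) (f : R -> R) (x : R) :
  smooth_on D f -> D x -> exists d, is_deriv_within D f x d.
Proof.
intros [Dn [HD0 HDS]] Hx.
exists (Dn 1%nat x). intros P HP.
specialize (HDS O x Hx P HP); unfold filtermap, within in *.
eapply filter_imp; [| exact HDS]; simpl.
intros y Hy Dy. rewrite <- (HD0 y Dy), <- (HD0 x Hx). now apply Hy.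
Qed.

Lemma is_deriv_within_of_is_derive (D : R -> Prop) (f g : R -> R) (x d : R) :
  (forall s, D s -> g s = f s) -> D x -> is_derive g x d ->
  is_deriv_within D f x d.
Proof.
intros Hgf Hx Hg P [e He].
destruct (proj1 (is_derive_Reals g x d) Hg e (cond_pos e)) as [del Hdel].
exists del. intros y Hy Hyx Dy. apply He.
rewrite <- (Hgf y Dy), <- (Hgf x Hx).
replace y with (x + (y - x)) at 1 by ring.
apply Hdel; [lra |].
exact Hy.
Qed.

(* Point reflection of [u] through [(0, u 0)]: its difference quotients at 0 are
   those of [u] taken from the right, so a one-sided derivative becomes a derivative. *)
Definition reflect0 (u : R -> R) (s : R) : R :=
  if Rle_dec 0 s then u s else 2 * u 0 - u (- s).

Lemma reflect0_diff_quotient (u : R -> R) (h : R) : h <> 0 ->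
  (reflect0 u h - reflect0 u 0) / h = (u (Rabs h) - u 0) / Rabs h.
Proof.
intros Hh; unfold reflect0.
destruct (Rle_dec 0 0) as [_ | H0]; [| lra].
destruct (Rle_dec 0 h) as [Hp | Hn].
- now rewrite Rabs_right by lra.
- rewrite Rabs_left by lra. field. lra.
Qed.

Lemma reflect0_nonneg (u : R -> R) (s : R) : 0 <= s -> reflect0 u s = u s.
Proof. intros Hs; unfold reflect0; now destruct (Rle_dec 0 s). Qed.

Lemma is_derive_reflect0 (eps : R) (u : R -> R) (d : R) : 0 < eps ->
  is_deriv_within (Ico0 eps) u 0 d -> is_derive (reflect0 u) 0 d.
Proof.
intros Heps Hu. apply is_derive_Reals. intros e He.
assert (Hball : locally d (fun y => Rabs (y - d) < e)) by now exists (mkposreal e He).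
destruct (Hu _ Hball) as [del Hdel].
assert (Hm : 0 < Rmin del eps) by (apply Rmin_pos; [apply cond_pos | lra]).
exists (mkposreal _ Hm); simpl; intros h Hh0 Hh.
rewrite Rplus_0_l, reflect0_diff_quotient by exact Hh0.
pose proof (Rmin_l del eps); pose proof (Rmin_r del eps).
pose proof (Rabs_pos_lt h Hh0).
specialize (Hdel (Rabs h)); rewrite Rminus_0_r in Hdel; apply Hdel.
- change (Rabs (Rabs h - 0) < del). rewrite Rminus_0_r, Rabs_Rabsolu. lra.
- lra.
- split; lra.
Qed.

Lemma is_deriv_within_Fb_critical_curve (beta theta eps d1 d2 : R) (m : R -> R * R) :
  0 < eps -> beta <> 0 ->
  is_deriv_within (Ico0 eps) (fun r => fst (m r)) 0 d1 ->
  is_deriv_within (Ico0 eps) (fun r => snd (m r)) 0 d2 ->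
  critical beta theta (m 0) 0 ->
  is_deriv_within (Ico0 eps) (fun r => Fb beta theta (m r) r) 0
    (- field_coupling theta (m 0)).
Proof.
intros Heps Hbeta H1 H2 Hc.
set (u1 := reflect0 (fun r => fst (m r))); set (u2 := reflect0 (fun r => snd (m r))).
assert (Hu : forall s, 0 <= s -> (u1 s, u2 s) = m s).
{ intros s Hs; unfold u1, u2; rewrite !reflect0_nonneg by exact Hs.
  now destruct (m s). }
apply (is_deriv_within_of_is_derive _ _ (fun s => Fb beta theta (u1 s, u2 s) s)).
- intros s [Hs _]; now rewrite Hu.
- unfold Ico0; lra.
- rewrite <- (Hu 0) by lra. rewrite <- (Hu 0) in Hc by lra.
  apply (is_derive_Fb_critical_curve _ _ _ _ _ d1 d2 Hbeta Hc);
    now apply (is_derive_reflect0 eps).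
Qed.

Lemma cos_sum_thirds (theta : R) :
  cos (theta - ang 0) + cos (theta - ang 1) + cos (theta - ang 2) = 0.
Proof.
unfold ang; simpl INR.
replace (2 * PI * 0 / 3) with 0 by field.
replace (2 * PI * 1 / 3) with (PI - PI / 3) by field.
replace (2 * PI * (1 + 1) / 3) with (PI / 3 + PI) by field.
rewrite (cos_minus theta 0), (cos_minus theta (PI - PI / 3)),
  (cos_minus theta (PI / 3 + PI)), Rtrigo_facts.cos_pi_minus, sin_PI_x,
  neg_cos, neg_sin, cos_0, sin_0, cos_PI3.
lra.
Qed.

Lemma field_coupling_cpt (theta t : R) (i : nat) : (i <= 2)%nat ->
  - field_coupling theta (cpt t i) = (3 * t - 1) * cos (theta - ang i).
Proof.
intros Hi; pose proof (cos_sum_thirds theta).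
unfold field_coupling.
destruct i as [| [| [| i]]]; [| | | lia]; simpl xk; nra.
Qed.

Theorem lemma5p1 (beta p q r_e theta eps : R) (i : nat)
  (m s : R -> R * R) :
  2 < beta ->
  0 < p < 1/2 -> 0 < q < 1/2 -> p < q ->
  f0 p = beta -> f0 q = beta ->
  (forall t, 0 < t < 1/2 -> f0 t = beta -> t = p \/ t = q) ->
  0 <= r_e -> 0 <= theta < 2 * PI ->
  0 < eps -> (i <= 2)%nat ->
  smooth_on (Ico0 eps) (fun r => fst (m r)) ->
  smooth_on (Ico0 eps) (fun r => snd (m r)) ->
  smooth_on (Ico0 eps) (fun r => fst (s r)) ->
  smooth_on (Ico0 eps) (fun r => snd (s r)) ->
  m 0 = cpt p i -> s 0 = cpt q i ->
  (forall r, 0 <= r < eps -> critical beta theta (m r) r) ->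
  (forall r, 0 <= r < eps -> critical beta theta (s r) r) ->
  is_deriv_within (Ico0 eps) (fun r => Fb beta theta (m r) r) 0
    ((3 * p - 1) * cos (theta - 2 * PI * INR i / 3)) /\
  is_deriv_within (Ico0 eps) (fun r => Fb beta theta (s r) r) 0
    ((3 * q - 1) * cos (theta - 2 * PI * INR i / 3)).
Proof.
intros Hbeta _ _ _ _ _ _ _ _ Heps Hi Hm1 Hm2 Hs1 Hs2 Hm0 Hs0 Hcm Hcs.
assert (Hb : beta <> 0) by lra.
assert (H0 : Ico0 eps 0) by (unfold Ico0; lra).
destruct (smooth_on_is_deriv_within _ _ _ Hm1 H0) as [a1 A1].
destruct (smooth_on_is_deriv_within _ _ _ Hm2 H0) as [a2 A2].
destruct (smooth_on_is_deriv_within _ _ _ Hs1 H0) as [b1 B1].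
destruct (smooth_on_is_deriv_within _ _ _ Hs2 H0) as [b2 B2].
change (2 * PI * INR i / 3) with (ang i).
rewrite <- (field_coupling_cpt theta p i Hi), <- (field_coupling_cpt theta q i Hi), <- Hm0, <- Hs0.
split.
- apply (is_deriv_within_Fb_critical_curve _ _ _ a1 a2); auto.
- apply (is_deriv_within_Fb_critical_curve _ _ _ b1 b2); auto.
Qed.
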